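(* Let $T=\{0,\dots,N\}$ and $\mathbb{F}$ a field. Let $K$ be a finite simplicial complex with simplices $\sigma$ and let $K_\bullet\colon\emptyset=K_0\subseteq\dots\subseteq K_N=K$ and $L_\bullet\colon\emptyset=L_0\subseteq\dots\subseteq L_N=K$ be filtrations of $K$ by subcomplexes with $L_t\subseteq K_t$ for all $t$, and let $f_\bullet\colon L_\bullet\to K_\bullet$ be the inclusion. Define $k(\sigma)=\min\{t\mid\sigma\in K_t\}$ and $l(\sigma)=\min\{t\mid\sigma\in L_t\}$. Let $\sigma_1,\dots,\sigma_n$ be the simplices of $K$ ordered so that $l$ is non-decreasing, and $\tau_1,\dots,\tau_n$ the simplices ordered so that $k$ is non-decreasing (fixed orientations). Define $n\times n$ matrices $A$ (playing the role of $(D^L)^\perp$) and $B$ (playing the role of $(D^f)^\perp$) by \[ A_{i,j}=\text{coefficient of }\sigma_{n+1-j}\text{ in }\partial\sigma_{n+1-i},\qquad B_{i,j}=\text{coefficient of }\sigma_{n+1-j}\text{ in }\partial\tau_{n+1-i}, \] so column $j$ of both matrices corresponds to the simplex $\sigma_{n+1-j}$, row $i$ of $A$ to $\sigma_{n+1-i}$ and row $i$ of $B$ to $\tau_{n+1-i}$. Let $V$, $W$ be invertible upper-triangular matrices such that $R=AV$ and $S=BW$ are reduced. For a nonzero column of $R$, $V$ or $W$ let $\operatorname{pivsimp}$ denote the simplex indexing its pivot row under the row correspondence of $A$ (for $R,V,W$), and for a nonzero column of $S$ the simplex indexing its pivot row under the row correspondence of $B$. Then: (a) for every $j$, $s_j=0$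 if and only if $r_j=0$ (so that the reduction of $B$ can be performed with clearing, i.e. columns $j$ with $r_j=0$ may be set to zero in advance); and (b) the persistence module $\operatorname{im}H_*(f_\bullet)$, $t\mapsto\operatorname{im}(H_*(L_t;\mathbb{F})\to H_*(K_t;\mathbb{F}))$, has barcode given by the multiset \[ \left\{[\,l(\operatorname{pivsimp}w_j),\,k(\operatorname{pivsimp}s_j))\;\middle|\; s_j\neq0,\ [\,l(\operatorname{pivsimp}w_j),k(\operatorname{pivsimp}s_j))\neq\emptyset\right\}\cup\left\{[\,l(\operatorname{pivsimp}v_i),\infty)\;\middle|\; r_i=0\text{ and } i\notin\operatorname{pivs}R\right\}, \] where $[a,b)=\{t\in T\mid a\le t<b\}$ and $[a,\infty)=\{t\in T\mid t\ge a\}$.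
   Context: For a matrix $X$, $x_j$ denotes its $j$-th column; the pivot of a nonzero column is the largest row index with a nonzero entry; $\operatorname{pivs}X$ is the set of pivots of nonzero columns; $X$ is reduced if no two nonzero columns have the same pivot. Since rows are indexed in reverse filtration order, the pivot simplex of a column is the earliest (in the respective filtration order) simplex with a nonzero entry. A persistence module indexed by $T$ (functor from the poset $T$ to $\mathbb{F}$-vector spaces) has barcode a multiset of intervals $(I_\alpha)$ of $T$ if it is isomorphic to $\bigoplus_\alpha C(I_\alpha)$, where $C(I)$ is $\mathbb{F}$ on $I$ and $0$ elsewhere, with identity maps within $I$ and zero otherwise. Homology is taken in all degrees together. *)

From mathcomp Require Import all_boot all_order all_algebra.
Set Implicit Arguments. Unset Strict Implicit. Unset Printing Implicit Defensive.
Import GRing.Theory.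
Local Open Scope ring_scope.

Definition simplex (m : nat) := {set 'I_m}.

Definition is_complex (m : nat) (S : {set simplex m}) : Prop :=
  forall s, s \in S -> s != set0 /\
    (forall s' : simplex m, s' \subset s -> s' != set0 -> s' \in S).

(* Coefficient of [tau] in the boundary of [sigma].  The orientation of a
   simplex is the one induced by the vertex order of 'I_m, flipped when
   [eps] says so; [eps] is an arbitrary (fixed) choice of orientations. *)
Definition bdcoef (F : fieldType) (m : nat) (eps : simplex m -> bool)
  (tau sigma : simplex m) : F :=
  if (tau \subset sigma) && (#|sigma| == #|tau|.+1) then
    match [pick v in sigma :\: tau] with
    | Some v => (-1) ^+ (#|[set u in sigma | (u < v)%N]| + eps sigma + eps tau)
    | None => 0
    end
  else 0.

Definition entry (m N : nat) (X : nat -> {set simplex m}) (s : simplex m) : nat :=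
  find (fun t => s \in X t) (iota 0 N.+1).

Definition piv (F : fieldType) (n : nat) (X : 'M[F]_n) (j : 'I_n) : option 'I_n :=
  [pick i | (X i j != 0) && [forall i' : 'I_n, (X i' j != 0) ==> (i' <= i)%N]].

Definition pivs (F : fieldType) (n : nat) (X : 'M[F]_n) : {set 'I_n} :=
  [set i | [exists j, piv X j == Some i]].

Definition reduced (F : fieldType) (n : nat) (X : 'M[F]_n) : Prop :=
  forall j1 j2 : 'I_n, j1 != j2 -> piv X j1 != None -> piv X j1 != piv X j2.

Definition upper_triangular (F : fieldType) (n : nat) (X : 'M[F]_n) : Prop :=
  forall i j : 'I_n, (j < i)%N -> X i j = 0.

Definition pivsimp (F : fieldType) (m n : nat) (rowsimp : 'I_n -> simplex m)
  (X : 'M[F]_n) (j : 'I_n) : simplex m :=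
  match piv X j with Some i => rowsimp i | None => set0 end.

(* Chains of K are row vectors in F^n, coordinate i being the coefficient of
   the simplex [e i] (e : an enumeration of the simplices of K). *)
Definition bdmx (F : fieldType) (m n : nat) (eps : simplex m -> bool)
  (e : 'I_n -> simplex m) : 'M[F]_n :=
  \matrix_(i, j) bdcoef F eps (e j) (e i).   (* row i = boundary of e i *)

(* row space = chains supported on the set of simplices S *)
Definition suppmx (F : fieldType) (m n : nat) (e : 'I_n -> simplex m)
  (S : {set simplex m}) : 'M[F]_n :=
  \matrix_(i, j) ((i == j) && (e i \in S))%:R.

Definition cyclesmx (F : fieldType) (m n : nat) (eps : simplex m -> bool)
  (e : 'I_n -> simplex m) (S : {set simplex m}) : 'M[F]_n :=
  (suppmx F e S :&: kermx (bdmx F eps e))%MS.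

Definition boundsmx (F : fieldType) (m n : nat) (eps : simplex m -> bool)
  (e : 'I_n -> simplex m) (S : {set simplex m}) : 'M[F]_n :=
  (suppmx F e S *m bdmx F eps e)%MS.

(* A "subquotient" persistence module indexed by T = {0..N} in ambient space
   F^p: M_t = (row space of U t) / (row space of Bd t), with structure maps
   M_s -> M_t (s <= t) induced by the identity of F^p. *)

(* Isomorphism of two such modules: a family of linear maps (matrices) Phi t
   inducing well-defined maps M1_t -> M2_t, natural w.r.t. the structure maps,
   and bijective at each t (the inverse is then automatically natural). *)
Definition sq_iso (F : fieldType) (N p1 p2 : nat)
  (U1 B1 : nat -> 'M[F]_p1) (U2 B2 : nat -> 'M[F]_p2) : Prop :=
  exists Phi : nat -> 'M[F]_(p1, p2),
  forall t, (t <= N)%N ->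
    [/\ (U1 t *m Phi t <= U2 t)%MS,
        (B1 t *m Phi t <= B2 t)%MS,
        (forall s, (s <= t)%N -> (U1 s *m (Phi s - Phi t) <= B2 t)%MS),
        (forall x : 'rV[F]_p1, (x <= U1 t)%MS -> (x *m Phi t <= B2 t)%MS ->
             (x <= B1 t)%MS) &
        (U2 t <= U1 t *m Phi t + B2 t)%MS].

(* An interval of T = {0..N}: (a, Some b) is [a,b) = {t | a <= t < b},
   (a, None) is [a, oo) = {t | a <= t}. *)
Definition interval := (nat * option nat)%type.

(* The direct sum of the interval modules C(I) for I in the multiset [bars],
   as a subquotient module in F^(size bars): the generator e_i is born at
   the left end and killed at the right end of the i-th interval. *)
Definition barsU (F : fieldType) (bars : seq interval) (t : nat)
  : 'M[F]_(size bars) :=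
  \matrix_(i, j) ((i == j) && ((nth (0%N, None) bars i).1 <= t)%N)%:R.

Definition barsB (F : fieldType) (bars : seq interval) (t : nat)
  : 'M[F]_(size bars) :=
  \matrix_(i, j) ((i == j) &&
     (match (nth (0%N, None) bars i).2 with Some b => (b <= t)%N | None => false end))%:R.

Definition has_barcode (F : fieldType) (N p : nat) (U Bd : nat -> 'M[F]_p)
  (bars : seq interval) : Prop :=
  sq_iso N (barsU F bars) (barsB F bars) U Bd.

(* Write chains as row vectors in the basis listed by the rows of A, so that A is the boundary
   matrix acting on the right.  Since the rows of A list the simplices by decreasing l, the
   chains of L_t form the coordinate subspace of a final segment of coordinates, which upper
   triangular matrices preserve; the same holds for the chains of K_t in the basis listed by the
   rows of B, and B is a row permutation of A.

   A reduced matrix factors as R = G P with G upper unitriangular and P keeping only the pivot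
   entries.  From R = A V it follows that the cycles of L_t are spanned by the rows i of G^-1
   with rowA i in L_t and i not a pivot of R, and from S = B W that the boundaries of chains of
   K_t are spanned by the rows j of W^-1 whose column s_j has its pivot simplex in K_t.  Column
   prefixes of A and B have the same ranks, and the rank of a prefix counts its nonzero reduced
   columns, whence s_j = 0 iff r_j = 0.  As pivots of R index zero columns (A A = 0), the
   non-pivot indices split into those with r_i = 0 and those with s_j <> 0.  So the rows of
   W^-1 with s_j <> 0, living from l(rowA j) until k of the pivot simplex of s_j, together with
   the rows of G^-1 with r_i = 0 and i not a pivot, living forever, form a basis of the cycles
   of L_t adapted to the boundaries of K_t: independence modulo boundaries follows by comparing
   lowest nonzero coordinates. *)

From Pilot Require Import Defs.
From mathcomp Require Import all_boot all_order all_algebra ring fingroup perm.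
Set Implicit Arguments. Unset Strict Implicit. Unset Printing Implicit Defensive.
Import GRing.Theory.
Local Open Scope ring_scope.

(** * Coordinate subspaces and triangular matrices *)

Section MaskMatrix.
Variable F : fieldType.

Definition maskmx n (P : pred 'I_n) : 'M[F]_n := \matrix_(i, j) ((i == j) && P i)%:R.

Lemma mulmx_maskmx p n (X : 'M[F]_(p, n)) P r k :
  (X *m maskmx P) r k = if P k then X r k else 0.
Proof.
rewrite mxE (bigD1 k) //= mxE eqxx /= big1 ?addr0.
  by case: (P k); rewrite ?mulr1 ?mulr0.
by move=> i /negPf ik; rewrite mxE ik mulr0.
Qed.

Lemma maskmx_mulmx p n (X : 'M[F]_(n, p)) P r k :
  (maskmx P *m X) r k = if P r then X r k else 0.
Proof.
rewrite mxE (bigD1 r) //= mxE eqxx /= big1 ?addr0.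
  by case: (P r); rewrite ?mul1r ?mul0r.
by move=> i /negPf ik; rewrite mxE eq_sym ik mul0r.
Qed.

Lemma row_maskmx_mul n p (M : 'M[F]_(n, p)) P b :
  row b (maskmx P *m M) = if P b then row b M else 0.
Proof. by apply/rowP=> k; rewrite mxE maskmx_mulmx; case: (P b); rewrite !mxE. Qed.

Lemma row_sub_maskmx_mul n p (M : 'M[F]_(n, p)) (P : pred 'I_n) b :
  P b -> (row b M <= maskmx P *m M)%MS.
Proof. by move=> Pb; have := row_sub b (maskmx P *m M); rewrite row_maskmx_mul Pb. Qed.

Lemma sub_maskmxP p n (X : 'M[F]_(p, n)) P :
  reflect (forall r k, ~~ P k -> X r k = 0) (X <= maskmx P)%MS.
Proof.
apply: (iffP idP) => [/submxP[Y ->] r k /negPf nPk | X0].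
  by rewrite mulmx_maskmx nPk.
have -> : X = X *m maskmx P.
  by apply/matrixP=> r k; rewrite mulmx_maskmx; case: ifP => // /negbT /X0 ->.
exact: submxMl.
Qed.

Lemma eq_maskmx n (P Q : pred 'I_n) : P =1 Q -> maskmx P = maskmx Q.
Proof. by move=> PQ; apply/matrixP=> i j; rewrite !mxE PQ. Qed.

Lemma maskmxS n (P Q : pred 'I_n) : subpred P Q -> (maskmx P <= maskmx Q)%MS.
Proof.
move=> PQ; apply/sub_maskmxP=> r k nQk; rewrite mxE.
by case: eqP => //= ->; rewrite (negbTE (contra (@PQ k) nQk)).
Qed.

Lemma trmx_maskmx n (P : pred 'I_n) : (maskmx P)^T = maskmx P.
Proof. by apply/matrixP=> i j; rewrite !mxE eq_sym; case: eqP => // ->. Qed.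

Lemma mxrank_maskmxU n (P Q : pred 'I_n) : (forall i, P i -> ~~ Q i) ->
  \rank (maskmx (predU P Q)) = (\rank (maskmx P) + \rank (maskmx Q))%N.
Proof.
move=> PQ; have PQ0 i : P i && Q i = false by case: (P i) (PQ i) => // /(_ isT)/negPf.
have -> : (maskmx (predU P Q) :=: maskmx P + maskmx Q)%MS.
  apply/eqmxP/andP; split; last by rewrite addsmx_sub !maskmxS // => i /= ->; rewrite ?orbT.
  have -> : maskmx (predU P Q) = maskmx P + maskmx Q.
    apply/matrixP=> i j; rewrite !mxE /=; case: eqP => _ /=; rewrite ?addr0 //.
    by case: (P i) (PQ0 i) => /=; case: (Q i); rewrite ?addr0 ?add0r.
  exact: addmx_sub_adds.
apply: mxrank_disjoint_sum; apply/matrixP=> r k; rewrite mxE.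
have /sub_maskmxP Pk := capmxSl (maskmx P) (maskmx Q).
have /sub_maskmxP Qk := capmxSr (maskmx P) (maskmx Q).
by case Pk': (P k); [apply: Qk; apply: PQ | apply: Pk; rewrite Pk'].
Qed.

Lemma mxrank_maskmx1 n (i0 : 'I_n) : \rank (maskmx (pred1 i0)) = 1%N.
Proof.
have -> : maskmx (pred1 i0) = delta_mx i0 i0.
  apply/matrixP=> i j; rewrite !mxE /=.
  case: (i =P i0) => [->|/eqP/negPf ni]; first by rewrite andbT eq_sym.
  by rewrite andbF.
exact: (mxrank_delta F).
Qed.

Definition upclosed n (P : pred 'I_n) := forall i j : 'I_n, (i <= j)%N -> P i -> P j.
Definition downclosed n (P : pred 'I_n) := forall i j : 'I_n, (j <= i)%N -> P i -> P j.

Lemma upper_triangular_det n (M : 'M[F]_n) :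
  upper_triangular M -> \det M = \prod_i M i i.
Proof.
move=> uM; rewrite -det_tr det_trig; first by apply: eq_bigr => i _; rewrite mxE.
by apply/is_trig_mxP=> i j ij; rewrite mxE uM.
Qed.

Lemma upper_triangular_diag_neq0 n (M : 'M[F]_n) i :
  upper_triangular M -> M \in unitmx -> M i i != 0.
Proof.
move=> uM; rewrite unitmxE unitfE (upper_triangular_det uM).
by rewrite (bigD1 i) //= mulf_eq0 negb_or => /andP[].
Qed.

Lemma upper_triangular_unitmx n (M : 'M[F]_n) :
  upper_triangular M -> (forall i, M i i != 0) -> M \in unitmx.
Proof.
move=> uM M0; rewrite unitmxE unitfE (upper_triangular_det uM).
by rewrite prodf_seq_neq0; apply/allP=> i _; rewrite M0.
Qed.

Lemma maskmx_mul_upper n (M : 'M[F]_n) P :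
  upper_triangular M -> upclosed P -> (maskmx P *m M <= maskmx P)%MS.
Proof.
move=> uM uP; apply/sub_maskmxP=> r k nPk; rewrite maskmx_mulmx.
case Pr: (P r) => //; apply: uM; rewrite ltnNge; apply: contra nPk => rk.
exact: uP rk Pr.
Qed.

Lemma submx_maskmx_mul_upper n p (M : 'M[F]_n) P (X : 'M[F]_(p, n)) :
  upper_triangular M -> upclosed P -> (X <= maskmx P)%MS -> (X *m M <= maskmx P)%MS.
Proof. by move=> uM uP XP; apply: submx_trans (maskmx_mul_upper uM uP); apply: submxMr. Qed.

Lemma upper_triangular_invmx n (M : 'M[F]_n) :
  upper_triangular M -> M \in unitmx -> upper_triangular (invmx M).
Proof.
move=> uM Mu r k kr; pose P := [pred i : 'I_n | r <= i]%N.
have uP : upclosed P by move=> i j ij /= /leq_trans; apply.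
have PM : (maskmx P *m M == maskmx P)%MS.
  by rewrite -(mxrank_leqif_eq (maskmx_mul_upper uM uP)) mxrankMfree ?row_free_unit.
have : (row r (maskmx P) *m invmx M <= maskmx P)%MS.
  rewrite -row_mul (submx_trans (row_sub _ _)) // -{2}(mulmxK Mu (maskmx P)).
  by rewrite submxMr // (eqmxP PM).
move/sub_maskmxP=> /(_ 0 k); rewrite /= -ltnNge => /(_ kr) <-.
by rewrite -row_mul mxE maskmx_mulmx /= leqnn.
Qed.

Lemma maskmx_mul_upper_eqmx n (M : 'M[F]_n) P :
  upper_triangular M -> M \in unitmx -> upclosed P -> (maskmx P *m M :=: maskmx P)%MS.
Proof.
move=> uM Mu uP; apply/eqmxP; rewrite maskmx_mul_upper //=.
rewrite -{1}(mulmxKV Mu (maskmx P)) submxMr //.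
exact: maskmx_mul_upper (upper_triangular_invmx uM Mu) uP.
Qed.

Lemma upper_mul_maskmx_down n (M : 'M[F]_n) P :
  upper_triangular M -> downclosed P -> M *m maskmx P = maskmx P *m M *m maskmx P.
Proof.
move=> uM dP; apply/matrixP=> i k; rewrite !mulmx_maskmx maskmx_mulmx.
case Pk: (P k) => //; case Pi: (P i) => //; apply: uM; rewrite ltnNge.
by apply: contraFN Pi => ik; apply: dP ik Pk.
Qed.

Lemma sum_enum_scale_row n p (P : pred 'I_n) (f : 'I_n -> F)
    (M : 'M[F]_(n, p)) :
  \sum_(j <- enum 'I_n | P j) f j *: row j M = (\row_j (if P j then f j else 0)) *m M.
Proof.
rewrite mulmx_sum_row big_enum_cond /= big_mkcond /=; apply: eq_bigr => j _.
by rewrite mxE; case: (P j); rewrite ?scale0r.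
Qed.

End MaskMatrix.

(** * Pivots of reduced matrices *)

Section Pivots.
Variable F : fieldType.

Lemma piv_Some n (X : 'M[F]_n) j i : piv X j = Some i ->
  X i j != 0 /\ (forall i', X i' j != 0 -> (i' <= i)%N).
Proof.
rewrite /piv; case: pickP => // i0 /andP[nz /forallP le_i0] [<-]; split => // i' nz'.
by have := le_i0 i'; rewrite nz'.
Qed.

Lemma piv_None n (X : 'M[F]_n) j : piv X j = None <-> (forall i, X i j = 0).
Proof.
split=> [|X0]; last by rewrite /piv; case: pickP => // i /andP[]; rewrite X0 eqxx.
rewrite /piv; case: pickP => // noPiv _ i; apply/eqP; apply/negP=> /negP nz.
have [i1 nz1 max_i1] := @arg_maxnP _ i (fun i => X i j != 0) val nz.
move: (noPiv i1); rewrite nz1 => /negP; apply; apply/forallP=> i'.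
by apply/implyP; apply: max_i1.
Qed.

Lemma col0P n (X : 'M[F]_n) j : reflect (forall i, X i j = 0) (col j X == 0).
Proof.
apply: (iffP eqP) => [/matrixP X0 i | X0]; first by have := X0 i 0; rewrite !mxE.
by apply/matrixP=> i k; rewrite !mxE X0.
Qed.

Lemma piv_eqNone n (X : 'M[F]_n) j : (piv X j == None) = (col j X == 0).
Proof. by apply/eqP/col0P => /piv_None. Qed.

Lemma reduced_piv_inj n (X : 'M[F]_n) j1 j2 p :
  reduced X -> piv X j1 = Some p -> piv X j2 = Some p -> j1 = j2.
Proof.
move=> redX p1 p2; apply/eqP; apply: contraT => j12.
by have := redX _ _ j12; rewrite p1 p2 eqxx => /(_ isT).
Qed.

Lemma piv_upper_triangular n (M : 'M[F]_n) j :
  upper_triangular M -> M \in unitmx -> piv M j = Some j.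
Proof.
move=> uM Mu; have Mjj := upper_triangular_diag_neq0 j uM Mu.
have below i : M i j != 0 -> (i <= j)%N.
  by apply: contraR; rewrite -ltnNge => /uM ->.
rewrite /piv; case: pickP => [i /andP[Mij /forallP le_i]|/(_ j)]; last first.
  by rewrite Mjj /= => /negbT/negP; case; apply/forallP=> i'; apply/implyP/below.
congr Some; apply/val_inj/eqP; rewrite eqn_leq below //=.
by have := le_i j; rewrite Mjj.
Qed.

Definition pivot_mx n (X : 'M[F]_n) : 'M[F]_n :=
  \matrix_(p, j) (if piv X j == Some p then X p j else 0).

Lemma pivot_mx_neq0 n (X : 'M[F]_n) p j : (pivot_mx X p j != 0) = (piv X j == Some p).
Proof.
rewrite mxE; case: (piv X j =P Some p) => [/piv_Some[-> _] //|_].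
by rewrite eqxx.
Qed.

Definition pivot_cols_mx n (X : 'M[F]_n) : 'M[F]_n :=
  \matrix_(a, b) (if [pick j | piv X j == Some b] is Some j then X a j / X b j
                  else (a == b)%:R).

Lemma pivot_cols_mx_upper n (X : 'M[F]_n) : upper_triangular (pivot_cols_mx X).
Proof.
move=> a b ba; rewrite mxE; case: pickP => [j /eqP /piv_Some[_ le_b]|_].
  case: (X a j =P 0) => [->|/eqP nz]; first by rewrite mul0r.
  by have := le_b _ nz; rewrite leqNgt ba.
by case: eqP => // ab; move: ba; rewrite ab ltnn.
Qed.

Lemma pivot_cols_mx_diag n (X : 'M[F]_n) b : pivot_cols_mx X b b = 1.
Proof.
rewrite mxE; case: pickP => [j /eqP /piv_Some[nz _]|_]; first by rewrite divff.
by rewrite eqxx.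
Qed.

Lemma pivot_cols_mx_unit n (X : 'M[F]_n) : pivot_cols_mx X \in unitmx.
Proof.
apply: upper_triangular_unitmx; first exact: pivot_cols_mx_upper.
by move=> i; rewrite pivot_cols_mx_diag oner_neq0.
Qed.

Lemma pivot_cols_mxK n (X : 'M[F]_n) : reduced X -> pivot_cols_mx X *m pivot_mx X = X.
Proof.
move=> redX; apply/matrixP=> a j; rewrite mxE.
case pj: (piv X j) => [p|]; last first.
  move/piv_None: pj => X0; rewrite X0 big1 // => b _.
  by rewrite [pivot_mx X b j]mxE X0; case: ifP; rewrite mulr0.
rewrite (bigD1 p) //= big1 ?addr0; last first.
  move=> b nb; rewrite [pivot_mx X b j]mxE pj; case: eqP => [[pb]|_]; last by rewrite mulr0.
  by move: nb; rewrite pb eqxx.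
rewrite [pivot_mx X p j]mxE pj eqxx [pivot_cols_mx X a p]mxE.
case: pickP => [j' /eqP pj'|/(_ j)]; last by rewrite pj eqxx.
by rewrite (reduced_piv_inj redX pj' pj) divfK //; case/piv_Some: pj.
Qed.

Lemma maskmx_mul_partial_perm n (M : 'M[F]_n) (P : pred 'I_n) (phi : 'I_n -> option 'I_n) :
  (forall r c, (M r c != 0) = (phi r == Some c)) ->
  (maskmx F P *m M :=: maskmx F [pred c | [exists r, P r && (phi r == Some c)]])%MS.
Proof.
move=> Mphi; apply/eqmxP/andP; split.
  apply/sub_maskmxP=> r c nimg; rewrite maskmx_mulmx; case Pr: (P r) => //.
  apply/eqP; apply: contraNT nimg; rewrite Mphi => phi_r.
  by apply/existsP; exists r; rewrite Pr.
apply/row_subP=> c; rewrite -[maskmx F [pred c | _]]mulmx1 row_maskmx_mul.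
case: ifP => [/existsP[r /andP[Pr /eqP phi_r]]|_]; last exact: sub0mx.
have Mrc : M r c != 0 by rewrite Mphi phi_r.
have -> : row c (1%:M : 'M[F]_n) = (M r c)^-1 *: row r (maskmx F P *m M).
  apply/rowP=> k; rewrite row_maskmx_mul Pr !mxE; case: (c =P k) => [<-|ck] /=.
    by rewrite mulVf.
  case: (M r k =P 0) => [->|/eqP]; first by rewrite mulr0.
  by rewrite Mphi phi_r => /eqP[].
by rewrite scalemx_sub // row_sub.
Qed.

End Pivots.

(** * The simplicial boundary *)

Section Boundary.
Variables (F : fieldType) (m : nat) (eps : simplex m -> bool).

Lemma bdcoef_neq0 (t s : simplex m) :
  bdcoef F eps t s != 0 -> t \subset s /\ #|s| = #|t|.+1.
Proof. by rewrite /bdcoef; case: ifP => [/andP[-> /eqP ->] //|]; rewrite eqxx. Qed.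

Lemma bdcoef_face (s : simplex m) v : v \in s ->
  bdcoef F eps (s :\ v) s = (-1) ^+ (#|[set u in s | (u < v)%N]| + eps s + eps (s :\ v)).
Proof.
move=> vs; rewrite /bdcoef subsetDl (cardsD1 v s) vs add1n eqxx /=.
have -> : s :\: (s :\ v) = [set v].
  apply/setP=> x; rewrite !inE; case: (x =P v) => [->|]; rewrite ?vs //.
  by case: (x \in s).
by case: pickP => [x|/(_ v)]; rewrite inE ?eqxx // => /eqP ->.
Qed.

Lemma codim1_face (x s : simplex m) :
  x \subset s -> #|s| = #|x|.+1 -> exists2 y, y \in s & x = s :\ y.
Proof.
move=> xs cs; have /cards1P[y sxy] : #|s :\: x| == 1%N by rewrite cardsDS // cs subSnn.
have ys : y \in s by move/setP: (sxy) => /(_ y); rewrite !inE eqxx => /andP[].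
exists y => //; apply/setP=> z; move/setP: sxy => /(_ z); rewrite !inE.
case zx: (z \in x); last by move=> /= ->; case: (z == y).
by rewrite (subsetP xs z zx) => <-.
Qed.

(* Removing v lowers the position of w by one, while removing w leaves that of v unchanged. *)
Lemma bdcoef_codim2 (s : simplex m) v w : v \in s -> w \in s -> (v < w)%N ->
  bdcoef F eps (s :\ v) s * bdcoef F eps (s :\ v :\ w) (s :\ v) +
  bdcoef F eps (s :\ w) s * bdcoef F eps (s :\ w :\ v) (s :\ w) = 0.
Proof.
move=> vs ws vw; have vw' : v != w by rewrite neq_ltn vw.
have wsv : w \in s :\ v by rewrite !inE eq_sym vw' ws.
have vsw : v \in s :\ w by rewrite !inE vw' vs.
rewrite !bdcoef_face // [s :\ w :\ v]setDDl setUC -setDDl.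
have -> : #|[set u in s :\ w | (u < v)%N]| = #|[set u in s | (u < v)%N]|.
  apply: eq_card => x; rewrite !inE; case: (x =P w) => [->|] //=.
  by rewrite ltnNge ltnW // andbF.
have : #|[set u in s | (u < w)%N]| = #|[set u in s :\ v | (u < w)%N]|.+1.
  by rewrite (cardsD1 v) inE vs vw; congr _.+1; apply: eq_card => x; rewrite !inE andbA.
move=> ->; set a := #|_|; set b := #|_|.
have sq_sign (c : bool) : (-1) ^+ c * (-1) ^+ c = 1 :> F by rewrite -expr2 sqrr_sign.
rewrite !exprD !exprS.
transitivity ((-1) ^+ a * (-1) ^+ eps s * (-1) ^+ b * (-1) ^+ eps (s :\ v :\ w) *
  ((-1) ^+ eps (s :\ v) * (-1) ^+ eps (s :\ v) - (-1) ^+ eps (s :\ w) * (-1) ^+ eps (s :\ w)) : F).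
  by ring.
by rewrite !sq_sign subrr mulr0.
Qed.

Lemma sum_bdcoef_sq (s u : simplex m) :
  \sum_(x : simplex m) bdcoef F eps x s * bdcoef F eps u x = 0.
Proof.
have term0 x : bdcoef F eps x s != 0 -> bdcoef F eps u x != 0 ->
    [/\ x \subset s, u \subset x, #|s| = #|x|.+1 & #|x| = #|u|.+1].
  by move=> /bdcoef_neq0[xs cs] /bdcoef_neq0[ux cx].
have [|codim2] := boolP ((u \subset s) && (#|s| == #|u|.+2)); last first.
  apply: big1 => x _; case: (bdcoef F eps x s =P 0) => [-> | /eqP nz1]; first by rewrite mul0r.
  case: (bdcoef F eps u x =P 0) => [-> | /eqP nz2]; first by rewrite mulr0.
  case: (term0 x nz1 nz2) => xs ux cs cx; case/negP: codim2.
  by rewrite (subset_trans ux xs) cs cx eqxx.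
case/andP=> us /eqP cs.
have /cards2P[v0 [w0 [vw0 suvw0]]] : #|s :\: u| == 2%N by rewrite cardsDS // cs -addn2 addKn.
have [v [w [vw suvw]]] : exists v w : 'I_m, (v < w)%N /\ s :\: u = [set v; w].
  case: (ltngtP v0 w0) => [lt|lt|/val_inj e]; first by exists v0, w0.
    by exists w0, v0; rewrite suvw0 setUC.
  by rewrite e eqxx in vw0.
have in_suvw z : (z \in s) && (z \notin u) = (z == v) || (z == w).
  by move/setP: suvw => /(_ z); rewrite !inE andbC.
have vs : v \in s by have := in_suvw v; rewrite eqxx => /andP[].
have ws : w \in s by have := in_suvw w; rewrite eqxx orbT => /andP[].
have vw' : v != w by rewrite neq_ltn vw.
have u_vw : u = s :\ v :\ w.
  by rewrite setDDl -suvw setDDr setDv set0U (setIidPr us).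
have u_wv : u = s :\ w :\ v by rewrite u_vw !setDDl setUC.
have svw : s :\ w != s :\ v.
  by apply/eqP=> /setP/(_ w); rewrite !inE eqxx eq_sym vw' ws.
rewrite (bigD1 (s :\ v)) // (bigD1 (s :\ w)) //= big1 ?addr0; last first.
  move=> x /andP[xv xw]; case: (bdcoef F eps x s =P 0) => [-> | /eqP nz1]; first by rewrite mul0r.
  case: (bdcoef F eps u x =P 0) => [-> | /eqP nz2]; first by rewrite mulr0.
  case: (term0 x nz1 nz2) => xs ux cs' _; have [y ys xy] := codim1_face xs cs'.
  have : y \notin u by apply: contraTN ux => yu; apply/subsetPn; exists y; rewrite // xy !inE eqxx.
  move/(conj ys)/andP; rewrite in_suvw => /orP[]/eqP yvw.
    by rewrite xy yvw eqxx in xv.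
  by rewrite xy yvw eqxx in xw.
by rewrite {1}u_vw u_wv bdcoef_codim2.
Qed.

Lemma bdmx_sq n (e : 'I_n -> simplex m) (K : {set simplex m}) :
  is_complex K -> injective e -> (forall i, e i \in K) ->
  (forall s, s \in K -> exists i, e i = s) -> bdmx F eps e *m bdmx F eps e = 0.
Proof.
move=> cK e_inj eK e_onto; apply/matrixP=> i k; rewrite !mxE.
under eq_bigr do rewrite !mxE.
have imK : K = e @: 'I_n.
  by apply/setP=> s; apply/idP/imsetP => [/e_onto[j <-] | [j _ ->] //]; exists j.
rewrite -[RHS](sum_bdcoef_sq (e i) (e k)) (bigID (mem K)) /= [X in _ = _ + X]big1 ?addr0.
  by rewrite imK big_imset //; move=> ? ? _ _ /e_inj.
move=> x xK; case: (bdcoef F eps x (e i) =P 0) => [-> | /eqP nz]; first by rewrite mul0r.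
case: (bdcoef F eps (e k) x =P 0) => [-> | /eqP /bdcoef_neq0[ex cx]]; first by rewrite mulr0.
have [xi _] := bdcoef_neq0 nz; case: (cK _ (eK i)) => _ /(_ x xi) faceK.
have x0 : x != set0 by rewrite -card_gt0 cx.
by rewrite faceK in xK.
Qed.

End Boundary.

(** * Column reduction *)

Section Reduction.
Variables (F : fieldType) (n : nat) (A V R : 'M[F]_n).
Hypotheses (uV : upper_triangular V) (Vu : V \in unitmx).
Hypotheses (RAV : R = A *m V) (redR : reduced R).

Let G := pivot_cols_mx R.
Let Pm := pivot_mx R.

Lemma pivot_factorization : A = G *m Pm *m invmx V.
Proof. by rewrite pivot_cols_mxK // RAV mulmxK. Qed.

Definition pivs_in (P : pred 'I_n) : pred 'I_n :=
  [pred p | [exists j, P j && (piv R j == Some p)]].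

Definition has_piv_in (P : pred 'I_n) : pred 'I_n :=
  fun j => if piv R j is Some p then P p else false.

Lemma has_piv_in_col_neq0 P j : has_piv_in P j -> col j R != 0.
Proof. by rewrite -piv_eqNone /has_piv_in; case: (piv R j). Qed.

Lemma mxrank_mul_maskmx_down P :
  downclosed P -> \rank (A *m maskmx F P) = \rank (maskmx F (pivs_in P)).
Proof.
move=> dP; have uVi := upper_triangular_invmx uV Vu.
have -> : \rank (A *m maskmx F P) = \rank (R *m maskmx F P).
  apply/eqP; rewrite eqn_leq; apply/andP; split.
    have -> : A *m maskmx F P = R *m maskmx F P *m (invmx V *m maskmx F P).
      by rewrite -mulmxA (mulmxA (maskmx F P)) -upper_mul_maskmx_down // mulmxA RAV mulmxK.
    exact: mxrankM_maxl.
  have -> : R *m maskmx F P = A *m maskmx F P *m (V *m maskmx F P).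
    by rewrite RAV -!mulmxA (mulmxA (maskmx F P)) -upper_mul_maskmx_down.
  exact: mxrankM_maxl.
rewrite -[R](pivot_cols_mxK redR) -mulmxA.
rewrite (eqmxMfull _ (_ : row_full G)) ?row_full_unit ?pivot_cols_mx_unit //.
rewrite -mxrank_tr trmx_mul trmx_maskmx; apply/eqmx_rank/eqmxP.
apply: (maskmx_mul_partial_perm _ (phi := piv R)) => r c.
by rewrite mxE pivot_mx_neq0.
Qed.

Lemma mxrank_prefix_succ (j : 'I_n) :
  \rank (A *m maskmx F [pred k : 'I_n | k <= j]%N) =
  (\rank (A *m maskmx F [pred k : 'I_n | k < j]%N) + (col j R != 0%R))%N.
Proof.
rewrite !mxrank_mul_maskmx_down; first last.
- by move=> a b ba /= /(leq_trans ba).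
- by move=> a b ba /= /(leq_ltn_trans ba).
rewrite (@eq_maskmx _ _ _ (predU (pivs_in [pred k : 'I_n | k < j]%N) (fun p => piv R j == Some p))).
  rewrite mxrank_maskmxU; last first.
    move=> p /existsP[k /andP[/= kj /eqP pk]]; apply/negP=> /eqP pj.
    by move: kj; rewrite (reduced_piv_inj redR pk pj) ltnn.
  congr (_ + _)%N; rewrite -piv_eqNone; case: (piv R j) => [p|] /=.
    by rewrite -(mxrank_maskmx1 F p); congr (\rank _); apply: eq_maskmx => q; rewrite /= eq_sym.
  have -> : maskmx F (fun p : 'I_n => None == Some p) = 0.
    by apply/matrixP=> a b; rewrite !mxE andbF.
  by rewrite mxrank0.
move=> p /=; apply/existsP/orP => [[k /andP[kj pk]]|[/existsP[k /andP[kj pk]]|pj]].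
- move: kj; rewrite /= leq_eqVlt => /orP[/eqP/val_inj kj|kj]; first by right; rewrite -kj.
  by left; apply/existsP; exists k; rewrite /= kj.
- by exists k; rewrite /= ltnW.
- by exists j; rewrite /= leqnn.
Qed.

(* If column l had a pivot i, the entry (i, j) of [Pm *m invmx V *m G *m Pm], which equals
   [invmx G *m (A *m A) *m V], would be a product of three nonzero factors. *)
Lemma piv_col_eq0 j l : A *m A = 0 -> piv R j = Some l -> col l R = 0.
Proof.
move=> AA pj; apply/eqP; rewrite -piv_eqNone; case pl: (piv R l) => [i|] //; exfalso.
have uVi := upper_triangular_invmx uV Vu.
have E0 : Pm *m (invmx V *m G) *m Pm = 0.
  have -> : Pm *m (invmx V *m G) *m Pm = invmx G *m (A *m A) *m V.
    by rewrite pivot_factorization !mulmxA mulVmx ?pivot_cols_mx_unit // mul1mx mulmxKV.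
  by rewrite AA mulmx0 mul0mx.
have sum1 (f : 'I_n -> F) c : (forall b, b != c -> f b = 0) -> \sum_b f b = f c.
  by move=> f0; rewrite (bigD1 c) //= big1 ?addr0.
have : (Pm *m (invmx V *m G) *m Pm) i j = 0 by rewrite E0 mxE.
rewrite mxE (sum1 _ l); last first.
  move=> b nb; rewrite [Pm b j]mxE pj; case: eqP => [[eb]|]; last by rewrite mulr0.
  by move: nb; rewrite eb eqxx.
rewrite mxE (sum1 _ l); last first.
  move=> a na; rewrite [Pm i a]mxE; case: eqP => [pa|]; last by rewrite mul0r.
  by move: na; rewrite (reduced_piv_inj redR pa pl) eqxx.
rewrite [(invmx V *m G) l l]mxE (sum1 _ l); last first.
  move=> c nc; case: (ltngtP c l) => [cl|lc|/val_inj ecl].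
  - by rewrite uVi ?mul0r.
  - by rewrite pivot_cols_mx_upper ?mulr0.
  - by move: nc; rewrite ecl eqxx.
rewrite pivot_cols_mx_diag mulr1 ![Pm _ _]mxE pl pj !eqxx; apply/eqP.
have [nz1 _] := piv_Some pl; have [nz2 _] := piv_Some pj.
have nz3 := upper_triangular_diag_neq0 l uVi (etrans (unitmx_inv V) Vu).
by rewrite !mulf_eq0 (negPf nz1) (negPf nz2) (negPf nz3).
Qed.

Lemma kermx_maskmx_up P : upclosed P ->
  (maskmx F P :&: kermx A :=: maskmx F (predI P [pred i | i \notin pivs R]) *m invmx G)%MS.
Proof.
move=> uP; have Gu : G \in unitmx := pivot_cols_mx_unit R.
have APm : A *m V = G *m Pm by rewrite -RAV pivot_cols_mxK.
apply/eqmxP/andP; split.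
  set Y := (maskmx F P :&: kermx A)%MS.
  have YP : (Y <= maskmx F P)%MS := capmxSl _ _.
  have YA : Y *m A = 0 by apply/sub_kermxP; apply: capmxSr.
  rewrite -{1}(mulmxK Gu Y) submxMr //.
  apply/sub_maskmxP=> r k; rewrite negb_and negbK => /orP[nPk|kp].
    by move/sub_maskmxP: (submx_maskmx_mul_upper (pivot_cols_mx_upper R) uP YP) => ->.
  move: kp; rewrite inE => /existsP[j /eqP pj].
  have : (Y *m G *m Pm) r j = 0 by rewrite -mulmxA -APm mulmxA YA mul0mx mxE.
  rewrite mxE (bigD1 k) //= big1 ?addr0; last first.
    move=> b nb; rewrite [Pm b j]mxE pj; case: eqP => [[eb]|]; last by rewrite mulr0.
    by move: nb; rewrite eb eqxx.
  rewrite [Pm k j]mxE pj eqxx => /eqP; rewrite mulf_eq0 => /orP[/eqP //|].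
  by case/piv_Some: pj => /negPf ->.
rewrite sub_capmx; apply/andP; split.
  apply: submx_maskmx_mul_upper (upper_triangular_invmx (pivot_cols_mx_upper R) Gu) uP _.
  by apply: maskmxS => i /andP[].
apply/sub_kermxP; rewrite pivot_factorization !mulmxA mulmxKV //.
suff -> : maskmx F (predI P [pred i | i \notin pivs R]) *m Pm = 0 by rewrite mul0mx.
apply/matrixP=> r c; rewrite maskmx_mulmx [RHS]mxE; case: ifP => [/andP[_ nr]|//].
rewrite mxE; case: eqP => // pc; move: nr; rewrite !inE => /existsPn/(_ c).
by rewrite pc eqxx.
Qed.

Lemma maskmx_mul_up P : upclosed P ->
  (maskmx F P *m A :=: maskmx F (has_piv_in P) *m invmx V)%MS.
Proof.
move=> uP; rewrite pivot_factorization !mulmxA; apply: eqmxMr.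
have GP := maskmx_mul_upper_eqmx (pivot_cols_mx_upper R) (pivot_cols_mx_unit R) uP.
apply: eqmx_trans (eqmxMr _ GP) _.
pose phi p := [pick j | piv R j == Some p].
have Pm_phi r c : (Pm r c != 0) = (phi r == Some c).
  rewrite pivot_mx_neq0 /phi; case: pickP => [j /eqP pj|/(_ c) /= -> //].
  by apply/eqP/eqP => [pc|[<-] //]; rewrite (reduced_piv_inj redR pj pc).
apply: eqmx_trans (maskmx_mul_partial_perm _ Pm_phi) _.
rewrite (@eq_maskmx _ _ _ (has_piv_in P)) //.
move=> c; rewrite /has_piv_in /phi /=; case pc: (piv R c) => [p|].
  apply/existsP/idP => [[r /andP[Pr]]|Pp].
    by case: pickP => // j /eqP pj /eqP[jc]; move: pj; rewrite jc pc => -[->].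
  exists p; rewrite Pp /=; case: pickP => [j /eqP pj|/(_ c)]; last by rewrite pc eqxx.
  by rewrite (reduced_piv_inj redR pj pc).
apply/existsP => [[r /andP[_]]]; case: pickP => // j /eqP pj /eqP[jc].
by move: pj; rewrite jc pc.
Qed.

End Reduction.

(* For an upper triangular invertible G, [y *m G] and [y] have the same lowest nonzero
   coordinate. *)
Lemma disjoint_supp_mul_upper_eq0 (F : fieldType) n (G W : 'M[F]_n) (P Q : pred 'I_n)
    (y z : 'rV[F]_n) :
  upper_triangular G -> G \in unitmx -> upper_triangular W -> W \in unitmx ->
  (forall i, P i -> ~~ Q i) ->
  (y <= maskmx F P)%MS -> (z <= maskmx F Q)%MS -> y *m G = z *m W -> y = 0.
Proof.
move=> uG Gu uW Wu PQ yP zQ yGzW; apply/rowP=> k0; rewrite mxE; apply: contraTeq isT => nz0.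
have [p0 nzp0 minp0] := @arg_minnP _ k0 (fun k => y 0 k != 0) val nz0.
have Pp0 : P p0.
  by apply: contraTT nzp0 => nPp0; rewrite negbK; apply/eqP; move/sub_maskmxP: yP; apply.
pose Pge := [pred k : 'I_n | p0 <= k]%N; pose Pgt := [pred k : 'I_n | p0 < k]%N.
have uge : upclosed Pge by move=> a b ab /= /leq_trans; apply.
have ugt : upclosed Pgt by move=> a b ab /= /leq_trans; apply.
have yge : (y <= maskmx F Pge)%MS.
  apply/sub_maskmxP=> r k /=; rewrite -ltnNge (ord1 r) => kp.
  by apply: contraTeq kp => /minp0; rewrite -leqNgt.
have zge : (z <= maskmx F Pge)%MS.
  rewrite -(mulmxK Wu z) -yGzW; apply: (submx_maskmx_mul_upper (upper_triangular_invmx uW Wu) uge).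
  exact: submx_maskmx_mul_upper uG uge yge.
have zgt : (z <= maskmx F Pgt)%MS.
  apply/sub_maskmxP=> r k /=; rewrite -leqNgt leq_eqVlt => /orP[/eqP/val_inj ek|kp].
    by move/sub_maskmxP: zQ; apply; rewrite ek PQ.
  by move/sub_maskmxP: zge; apply; rewrite /= -ltnNge.
have ygt : (y <= maskmx F Pgt)%MS.
  rewrite -(mulmxK Gu y) yGzW; apply: (submx_maskmx_mul_upper (upper_triangular_invmx uG Gu) ugt).
  exact: submx_maskmx_mul_upper uW ugt zgt.
by move/sub_maskmxP: ygt => /(_ 0 p0); rewrite /= ltnn => /(_ isT) y0; rewrite y0 eqxx in nzp0.
Qed.

(** * Barcodes of subquotient modules *)

Section Barcode.
Variable F : fieldType.

Definition dead_at (t : nat) (I : Defs.interval) : bool :=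
  if I.2 is Some b then (b <= t)%N else false.

Definition alive_at (t : nat) (I : Defs.interval) : bool := (I.1 <= t)%N && ~~ dead_at t I.

Lemma barsU_maskmx bars t :
  barsU F bars t = maskmx F [pred b : 'I_(size bars) | (nth (0%N, None) bars b).1 <= t]%N.
Proof. by apply/matrixP=> i j; rewrite !mxE. Qed.

Lemma barsB_maskmx bars t :
  barsB F bars t = maskmx F [pred b : 'I_(size bars) | dead_at t (nth (0%N, None) bars b)].
Proof. by apply/matrixP=> i j; rewrite !mxE. Qed.

Lemma has_barcode_rows N p (U Bd : nat -> 'M[F]_p) bars (Phi : 'M[F]_(size bars, p)) :
  (forall t, (t <= N)%N ->
    [/\ (barsU F bars t *m Phi <= U t)%MS, (barsB F bars t *m Phi <= Bd t)%MS,
        (U t <= barsU F bars t *m Phi + Bd t)%MS &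
        forall x : 'rV_(size bars),
          (x <= maskmx F [pred b : 'I_(size bars) | alive_at t (nth (0%N, None) bars b)])%MS ->
          (x *m Phi <= Bd t)%MS -> x = 0]) ->
  has_barcode N U Bd bars.
Proof.
move=> H; exists (fun=> Phi) => t tN; have [bornU deadB span indep] := H t tN.
split=> //; first by move=> s _; rewrite subrr mulmx0 sub0mx.
rewrite barsU_maskmx barsB_maskmx => x xU xPhi.
set dead := [pred b : 'I_(size bars) | dead_at t (nth (0%N, None) bars b)].
have xaB : ((x - x *m maskmx F dead) *m Phi <= Bd t)%MS.
  rewrite mulmxBl; apply: addmx_sub => //; rewrite eqmx_opp -mulmxA.
  by rewrite (submx_trans (submxMl _ _)) // -barsB_maskmx.
have xa0 : x - x *m maskmx F dead = 0.
  apply: indep xaB; apply/sub_maskmxP=> r k.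
  rewrite mxE [X in _ + X]mxE mulmx_maskmx /= /alive_at.
  rewrite negb_and negbK => /orP[nborn | ->]; last by rewrite subrr.
  by have /sub_maskmxP x0 := xU; rewrite (x0 r k nborn); case: ifP; rewrite subrr.
by rewrite -(subrK (x *m maskmx F dead) x) xa0 add0r submxMl.
Qed.

Lemma has_barcode_reps N p (U Bd : nat -> 'M[F]_p) (X : eqType) (idx : seq X)
    (bar : X -> Defs.interval) (rep : X -> 'rV[F]_p) :
  uniq idx ->
  (forall t, (t <= N)%N ->
    [/\ forall x, x \in idx -> ((bar x).1 <= t)%N -> (rep x <= U t)%MS,
        forall x, x \in idx -> dead_at t (bar x) -> (rep x <= Bd t)%MS,
        (U t <= (\sum_(x <- idx | ((bar x).1 <= t)%N) <<rep x>>) + Bd t)%MS &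
        forall c : X -> F,
          (forall x, x \in idx -> c x != 0 -> alive_at t (bar x)) ->
          ((\sum_(x <- idx) c x *: rep x)%R <= Bd t)%MS -> forall x, x \in idx -> c x = 0]) ->
  has_barcode N U Bd (map bar idx).
Proof.
move=> idx_uniq H; case: idx => [|x0 idx'] in idx_uniq H *.
  apply: (has_barcode_rows (Phi := 0)) => t tN; have [_ _ span _] := H t tN.
  rewrite big_nil adds0mx in span; rewrite !mulmx0 adds0mx !sub0mx span.
  by split=> // x _ _; apply/rowP=> -[].
set idx := x0 :: idx' in idx_uniq H *.
have sz : size (map bar idx) = size idx by rewrite size_map.
pose xb (b : 'I_(size (map bar idx))) := nth x0 idx b.
have xb_idx (b : 'I_(size (map bar idx))) : xb b \in idx by rewrite mem_nth // -sz.
have bar_xb (b : 'I_(size (map bar idx))) : nth (0%N, None) (map bar idx) b = bar (xb b).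
  by rewrite (nth_map x0) // -sz.
have xb_onto y : y \in idx -> exists b, xb b = y.
  move=> yin; have lt : (index y idx < size (map bar idx))%N by rewrite sz index_mem.
  by exists (Ordinal lt); rewrite /xb nth_index.
pose Phi := \matrix_(b < size (map bar idx), k < p) rep (xb b) 0 k.
have rowPhi b : row b Phi = rep (xb b) by apply/rowP=> k; rewrite !mxE.
apply: (has_barcode_rows (Phi := Phi)) => t tN; have [bornU deadB span indep] := H t tN.
rewrite barsU_maskmx barsB_maskmx; split.
- apply/row_subP=> b; rewrite row_maskmx_mul rowPhi /= bar_xb.
  by case: ifP => [born|_]; [apply: bornU | apply: sub0mx].
- apply/row_subP=> b; rewrite row_maskmx_mul rowPhi /= bar_xb.
  by case: ifP => [dd|_]; [apply: deadB | apply: sub0mx].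
- apply: submx_trans span _; apply: addsmxS => //; rewrite big_seq_cond.
  elim/big_ind: _ => [|Y Z hY hZ|y /andP[yin born]]; first exact: sub0mx.
    by rewrite addsmx_sub hY hZ.
  have [b yb] := xb_onto y yin; rewrite -yb in born *; rewrite genmxE -rowPhi.
  by apply: row_sub_maskmx_mul; rewrite /= bar_xb.
move=> x xalive xB.
pose c y := \sum_(b | xb b == y) x 0 b.
have c_xb b : c (xb b) = x 0 b.
  rewrite /c (bigD1 b) //= big1 ?addr0 // => b' /andP[/eqP eb nb].
  suff eb' : b' = b by rewrite eb' eqxx in nb.
  by move/eqP: eb; rewrite /xb nth_uniq -?sz // => /eqP/val_inj.
have c0 : forall y, y \in idx -> c y = 0.
  apply: indep => [y yin|].
    have [b <-] := xb_onto y yin; rewrite c_xb -bar_xb; apply: contraNT => dead.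
    by apply/eqP; move/sub_maskmxP: xalive; apply.
  suff -> : (\sum_(y <- idx) c y *: rep y)%R = x *m Phi by [].
  rewrite (big_nth x0) big_mkord mulmx_sum_row -sz.
  by apply: eq_bigr => b _; rewrite rowPhi -c_xb.
by apply/rowP=> b; rewrite mxE -c_xb c0.
Qed.

Lemma sq_iso_mulmx_unit N p q (U1 B1 : nat -> 'M[F]_p) (U2 B2 U2' B2' : nat -> 'M[F]_q)
    (J : 'M[F]_q) : J \in unitmx ->
  (forall t, (U2' t :=: U2 t *m J)%MS) -> (forall t, (B2' t :=: B2 t *m J)%MS) ->
  sq_iso N U1 B1 U2 B2 -> sq_iso N U1 B1 U2' B2'.
Proof.
move=> Ju EU EB [Phi H]; exists (fun t => Phi t *m J) => t tN.
have [h1 h2 h3 h4 h5] := H t tN; split.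
- by rewrite EU mulmxA submxMr.
- by rewrite EB mulmxA submxMr.
- by move=> s st; rewrite -mulmxBl EB mulmxA submxMr // h3.
- by move=> x xU; rewrite EB mulmxA submxMfree ?row_free_unit //; apply: h4.
- rewrite EU; apply: (submx_trans (submxMr J h5)); rewrite addsmxMr.
  by apply: addsmxS; [rewrite mulmxA | rewrite EB].
Qed.

End Barcode.

(** * Filtrations and change of basis *)

Section Filtration.
Variables (m N : nat) (X : nat -> {set simplex m}).
Hypothesis X_mono : forall t, (t < N)%N -> X t \subset X t.+1.

Lemma filtration_subset a b : (a <= b)%N -> (b <= N)%N -> X a \subset X b.
Proof.
elim: b => [|b IHb]; first by rewrite leqn0 => /eqP ->.
rewrite leq_eqVlt => /orP[/eqP -> // | ab] bN.
exact: subset_trans (IHb ab (ltnW bN)) (X_mono bN).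
Qed.

Lemma mem_filtrationE x s : x \in X N -> (s <= N)%N -> (x \in X s) = (entry N X x <= s)%N.
Proof.
move=> xN sN; rewrite /entry; set P := fun t => x \in X t.
have hasP : has P (iota 0 N.+1).
  by apply/hasP; exists N; [rewrite mem_iota add0n ltnSn | exact: xN].
have ltf : (find P (iota 0 N.+1) < N.+1)%N by move: hasP; rewrite has_find size_iota.
have Pf := nth_find 0 hasP; rewrite nth_iota // add0n in Pf.
apply/idP/idP => [xs | fs]; last exact: (subsetP (filtration_subset fs sN)).
rewrite leqNgt; apply/negP => sf.
by have := before_find 0 sf; rewrite nth_iota ?add0n ?ltnS // /P xs.
Qed.

End Filtration.

Section ChangeOfBasis.
Variable F : fieldType.

Lemma capmx_mulmx_unit m1 m2 n (A : 'M[F]_(m1, n)) (B : 'M[F]_(m2, n)) (Q : 'M[F]_n) :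
  Q \in unitmx -> (A *m Q :&: B *m Q :=: (A :&: B) *m Q)%MS.
Proof.
move=> Qu; apply/eqmxP; rewrite capmxMr andbT.
rewrite -[X in (X <= _)%MS](mulmxKV Qu) submxMr //.
by apply: submx_trans (capmxMr _ _ _) _; rewrite !mulmxK.
Qed.

Lemma kermx_conj n (Q D : 'M[F]_n) : Q \in unitmx ->
  (kermx (Q *m D *m invmx Q) :=: kermx D *m invmx Q)%MS.
Proof.
move=> Qu; apply/eqmxP/andP; split; last first.
  by rewrite sub_kermx !mulmxA mulmxKV // mulmx_ker !mul0mx.
rewrite -[X in (X <= _)%MS](mulmxK Qu) submxMr // sub_kermx.
have := mulmx_ker (Q *m D *m invmx Q); rewrite !mulmxA => kerQDQ.
by rewrite -(mulmxKV Qu (_ *m D)) kerQDQ mul0mx.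
Qed.

Variables (m n : nat) (eps : simplex m -> bool) (e e' : 'I_n -> simplex m) (rho : 'S_n).
Hypothesis e'E : forall i, e' i = e (rho i).

Let Q : 'M[F]_n := perm_mx rho.
Let Qu : Q \in unitmx := unitmx_perm _ rho.

Lemma invmx_perm_mx : invmx Q = perm_mx rho^-1.
Proof.
have : Q *m perm_mx rho^-1 = 1%:M by rewrite -perm_mxM mulgV perm_mx1.
by move/(congr1 (mulmx (invmx Q))); rewrite mulKmx // mulmx1 => ->.
Qed.

Lemma bdmx_perm : bdmx F eps e' = Q *m bdmx F eps e *m invmx Q.
Proof.
rewrite invmx_perm_mx -col_permE -row_permE.
by apply/matrixP=> i j; rewrite !mxE !e'E.
Qed.

Lemma suppmx_perm X : suppmx F e' X = Q *m suppmx F e X *m invmx Q.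
Proof.
rewrite invmx_perm_mx -col_permE -row_permE.
by apply/matrixP=> i j; rewrite !mxE e'E (inj_eq perm_inj).
Qed.

Lemma boundsmx_perm X : (boundsmx F eps e' X :=: boundsmx F eps e X *m invmx Q)%MS.
Proof.
rewrite /boundsmx suppmx_perm bdmx_perm !mulmxA mulmxKV // -!mulmxA.
by apply: eqmxMfull; rewrite row_full_unit.
Qed.

Lemma cyclesmx_perm X : (cyclesmx F eps e' X :=: cyclesmx F eps e X *m invmx Q)%MS.
Proof.
rewrite /cyclesmx suppmx_perm bdmx_perm.
apply: eqmx_trans (capmx_mulmx_unit _ _ _); last by rewrite unitmx_inv.
apply: cap_eqmx; last exact: kermx_conj.
by rewrite -mulmxA; apply: eqmxMfull; rewrite row_full_unit.
Qed.

End ChangeOfBasis.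

(** * The persistent image *)

Section PersistentImage.
Variables (F : fieldType) (N m n : nat) (eps : simplex m -> bool).
Variables (K : {set simplex m}) (Kf Lf : nat -> {set simplex m}).
Hypothesis hK : is_complex K.
Hypotheses (hKN : Kf N = K) (hLN : Lf N = K).
Hypothesis hKmono : forall t, (t < N)%N -> Kf t \subset Kf t.+1.
Hypothesis hLmono : forall t, (t < N)%N -> Lf t \subset Lf t.+1.
Variables (sigma tau : 'I_n -> simplex m).
Hypotheses (hsig_inj : injective sigma) (hsig_in : forall i, sigma i \in K).
Hypothesis hsig_onto : forall s, s \in K -> exists i, sigma i = s.
Hypothesis hsig_ord : forall i j : 'I_n, (i <= j)%N ->
  (entry N Lf (sigma i) <= entry N Lf (sigma j))%N.
Hypotheses (htau_inj : injective tau) (htau_in : forall i, tau i \in K).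
Hypothesis htau_ord : forall i j : 'I_n, (i <= j)%N ->
  (entry N Kf (tau i) <= entry N Kf (tau j))%N.
Variables (A B V W R S : 'M[F]_n).
Hypothesis hA : A = \matrix_(i, j) bdcoef F eps (sigma (rev_ord j)) (sigma (rev_ord i)).
Hypothesis hB : B = \matrix_(i, j) bdcoef F eps (sigma (rev_ord j)) (tau (rev_ord i)).
Hypotheses (hVu : upper_triangular V) (hVi : V \in unitmx).
Hypotheses (hWu : upper_triangular W) (hWi : W \in unitmx).
Hypotheses (hR : R = A *m V) (hS : S = B *m W).
Hypotheses (hRred : reduced R) (hSred : reduced S).

Definition rowA (i : 'I_n) := sigma (rev_ord i).
Definition rowB (i : 'I_n) := tau (rev_ord i).

Lemma rowA_onto s : s \in K -> exists i, rowA i = s.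
Proof. by case/hsig_onto=> i <-; exists (rev_ord i); rewrite /rowA rev_ordK. Qed.

Lemma A_bdmx : A = bdmx F eps rowA. Proof. by rewrite hA. Qed.

Lemma A_sq : A *m A = 0.
Proof.
rewrite A_bdmx; apply: bdmx_sq hK _ (fun i => hsig_in _) rowA_onto.
by move=> i j /hsig_inj /rev_ord_inj.
Qed.

Definition rowBA (i : 'I_n) : 'I_n := odflt i [pick k | rowA k == rowB i].

Lemma rowBA_E i : rowA (rowBA i) = rowB i.
Proof.
rewrite /rowBA; case: pickP => [k /eqP //|noA].
by have [k rowAk] := rowA_onto (htau_in (rev_ord i)); have := noA k; rewrite rowAk eqxx.
Qed.

Lemma rowBA_inj : injective rowBA.
Proof. by move=> i j ij; have := rowBA_E i; rewrite ij rowBA_E => /htau_inj /rev_ord_inj. Qed.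

Definition rowBA_perm : 'S_n := perm rowBA_inj.

Lemma B_perm : B = perm_mx rowBA_perm *m A.
Proof.
rewrite -row_permE hA hB; apply/matrixP=> i j; rewrite !mxE permE.
by have := rowBA_E i; rewrite /rowA /rowB => ->.
Qed.

Lemma col_eq0_SR j : (col j S == 0) = (col j R == 0).
Proof.
have := mxrank_prefix_succ hVu hVi hR hRred j.
have := mxrank_prefix_succ hWu hWi hS hSred j.
have Pfull : row_full (perm_mx rowBA_perm : 'M[F]_n) by rewrite row_full_unit unitmx_perm.
rewrite B_perm -!mulmxA !(eqmxMfull _ Pfull) => ->.
by move/eqP; rewrite eqn_add2l => /eqP; do 2 case: (_ == 0).
Qed.

Let G := pivot_cols_mx R.
Let Ginv_unit : invmx G \in unitmx := etrans (unitmx_inv G) (pivot_cols_mx_unit R).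
Let Ginv_upper : upper_triangular (invmx G) :=
  upper_triangular_invmx (pivot_cols_mx_upper R) (pivot_cols_mx_unit R).
Let Winv_unit : invmx W \in unitmx := etrans (unitmx_inv W) hWi.
Let Winv_upper : upper_triangular (invmx W) := upper_triangular_invmx hWu hWi.

Definition inL t : pred 'I_n := fun i => rowA i \in Lf t.
Definition inK t : pred 'I_n := fun i => rowB i \in Kf t.
Definition cyc t := cyclesmx F eps rowA (Lf t).
Definition bnd t := boundsmx F eps rowA (Kf t).

Lemma mem_Lf t x : (t <= N)%N -> x \in K -> (x \in Lf t) = (entry N Lf x <= t)%N.
Proof. by move=> tN xK; apply: mem_filtrationE => //; rewrite hLN. Qed.

Lemma mem_Kf t x : (t <= N)%N -> x \in K -> (x \in Kf t) = (entry N Kf x <= t)%N.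
Proof. by move=> tN xK; apply: mem_filtrationE => //; rewrite hKN. Qed.

Lemma inL_up t : (t <= N)%N -> upclosed (inL t).
Proof.
move=> tN i j ij; rewrite /inL !mem_Lf ?hsig_in // => /(leq_trans _); apply.
by apply: hsig_ord; rewrite leq_sub2l.
Qed.

Lemma inK_up t : (t <= N)%N -> upclosed (inK t).
Proof.
move=> tN i j ij; rewrite /inK !mem_Kf ?htau_in // => /(leq_trans _); apply.
by apply: htau_ord; rewrite leq_sub2l.
Qed.

Lemma cyc_basis t : (t <= N)%N ->
  (cyc t :=: maskmx F (predI (inL t) [pred i | i \notin pivs R]) *m invmx G)%MS.
Proof.
by move=> tN; rewrite /cyc /cyclesmx -A_bdmx; apply: (kermx_maskmx_up hVi hR hRred (inL_up tN)).
Qed.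

Lemma bnd_basis t : (t <= N)%N -> (bnd t :=: maskmx F (has_piv_in S (inK t)) *m invmx W)%MS.
Proof.
move=> tN; apply: eqmx_trans (maskmx_mul_up hWi hS hSred (inK_up tN)).
rewrite /bnd /boundsmx -A_bdmx B_perm mulmxA.
have -> : maskmx F (inK t) *m perm_mx rowBA_perm =
          perm_mx rowBA_perm *m maskmx F (fun i => rowA i \in Kf t).
  apply/matrixP=> i c; rewrite maskmx_mulmx mulmx_maskmx !mxE permE.
  case: (rowBA i =P c) => [<-|_]; first by rewrite rowBA_E.
  by rewrite /= !if_same.
by rewrite -mulmxA; apply/eqmx_sym/eqmxMfull; rewrite row_full_unit unitmx_perm.
Qed.

Lemma birthE (M : 'M[F]_n) t j : upper_triangular M -> M \in unitmx -> (t <= N)%N ->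
  (entry N Lf (pivsimp rowA M j) <= t)%N = inL t j.
Proof. by move=> uM Mu tN; rewrite /pivsimp piv_upper_triangular // /inL mem_Lf ?hsig_in. Qed.

Lemma deathE t j : (t <= N)%N -> col j S != 0 ->
  (entry N Kf (pivsimp rowB S j) <= t)%N = has_piv_in S (inK t) j.
Proof.
move=> tN; rewrite -piv_eqNone /pivsimp /has_piv_in.
by case: (piv S j) => // p _; rewrite /inK mem_Kf ?htau_in.
Qed.

Lemma rowW_bnd t j : (t <= N)%N -> has_piv_in S (inK t) j -> (row j (invmx W) <= bnd t)%MS.
Proof. by move=> tN dj; rewrite (bnd_basis tN); apply: row_sub_maskmx_mul. Qed.

Lemma rowW_cyc t j : (t <= N)%N -> inL t j -> col j S != 0 -> (row j (invmx W) <= cyc t)%MS.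
Proof.
move=> tN Ltj Sj; rewrite /cyc /cyclesmx sub_capmx; apply/andP; split.
  apply: submx_trans (row_sub_maskmx_mul _ Ltj) _.
  exact: submx_maskmx_mul_upper Winv_upper (inL_up tN) (submx_refl _).
have dN : has_piv_in S (inK N) j.
  move: Sj; rewrite -piv_eqNone /has_piv_in /inK hKN.
  by case: (piv S j) => // p _; apply: htau_in.
have /submxP[D ->] := rowW_bnd (leqnn N) dN.
by rewrite sub_kermx -!mulmxA -A_bdmx A_sq !mulmx0.
Qed.

Lemma rowG_cyc t i : (t <= N)%N -> inL t i -> i \notin pivs R -> (row i (invmx G) <= cyc t)%MS.
Proof. by move=> tN Lti np; rewrite (cyc_basis tN); apply: row_sub_maskmx_mul; rewrite /= Lti. Qed.

Definition finite_bar j :=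
  (col j S != 0) && (entry N Lf (pivsimp rowA W j) < entry N Kf (pivsimp rowB S j))%N.
Definition essential i := (col i R == 0) && (i \notin pivs R).

Lemma nonpivot_split i : (i \notin pivs R) = essential i || (col i S != 0).
Proof.
rewrite /essential col_eq0_SR; case: (boolP (i \in pivs R)) => [|_]; last first.
  by rewrite andbT orbN.
rewrite inE => /existsP[j /eqP pj]; rewrite (piv_col_eq0 hVu hVi hR hRred A_sq pj).
by rewrite eqxx.
Qed.

Definition bar_index : seq ('I_n * bool) :=
  [seq (j, true) | j <- enum 'I_n & finite_bar j] ++
  [seq (i, false) | i <- enum 'I_n & essential i].

Definition bar (x : 'I_n * bool) : Defs.interval :=
  if x.2 then (entry N Lf (pivsimp rowA W x.1), Some (entry N Kf (pivsimp rowB S x.1)))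
  else (entry N Lf (pivsimp rowA V x.1), None).

Definition rep (x : 'I_n * bool) : 'rV[F]_n :=
  if x.2 then row x.1 (invmx W) else row x.1 (invmx G).

Lemma bar_index_uniq : uniq bar_index.
Proof.
have uniq_tagged b P : uniq [seq (j, b) | j <- enum 'I_n & P j].
  by rewrite map_inj_uniq; [apply/filter_uniq/enum_uniq | move=> i j []].
rewrite cat_uniq !uniq_tagged andbT /=.
by apply/hasPn => x /mapP[i _ ->]; apply/negP => /mapP[j _ []].
Qed.

Lemma mem_bar_index_finite j : ((j, true) \in bar_index) = finite_bar j.
Proof.
rewrite mem_cat; apply/orP/idP => [[/mapP[j' jin [->]] | /mapP[? _ []]] // | fj].
  by move: jin; rewrite mem_filter => /andP[].
by left; apply/mapP; exists j; rewrite // mem_filter fj mem_enum.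
Qed.

Lemma mem_bar_index_essential i : ((i, false) \in bar_index) = essential i.
Proof.
rewrite mem_cat; apply/orP/idP => [[/mapP[? _ []] // | /mapP[i' iin [->]]] | ei].
  by move: iin; rewrite mem_filter => /andP[].
by right; apply/mapP; exists i; rewrite // mem_filter ei mem_enum.
Qed.

Lemma cyc_decomposition t : (t <= N)%N ->
  (maskmx F (predI (inL t) essential) *m invmx G +
   maskmx F (predI (inL t) [pred j | col j S != 0]) *m invmx W :=: cyc t)%MS.
Proof.
move=> tN; set X1 := _ *m invmx G; set X2 := _ *m invmx W.
have ess_S0 i : essential i -> ~~ (col i S != 0) by case/andP; rewrite negbK col_eq0_SR.
have X1c : (X1 <= cyc t)%MS.
  by rewrite (cyc_basis tN) submxMr // maskmxS // => i /andP[/= -> /andP[]].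
have X2c : (X2 <= cyc t)%MS.
  apply/row_subP=> j; rewrite row_maskmx_mul.
  by case: ifP => [/andP[Lj Sj] | _]; [apply: rowW_cyc | apply: sub0mx].
have cap0 : (X1 :&: X2)%MS = 0.
  apply/eqP; rewrite -submx0; apply/row_subP=> r; set v := row r _.
  have /submxP[D1 vD1] : (v <= X1)%MS by apply: submx_trans (row_sub _ _) (capmxSl _ _).
  have /submxP[D2 vD2] : (v <= X2)%MS by apply: submx_trans (row_sub _ _) (capmxSr _ _).
  have disj i : predI (inL t) essential i -> ~~ predI (inL t) [pred j | col j S != 0] i.
    by case/andP=> _ /ess_S0 S0; rewrite /= (negPf S0) andbF.
  have D1_0 := disjoint_supp_mul_upper_eq0 Ginv_upper Ginv_unit Winv_upper Winv_unit
    disj (submxMl D1 _) (submxMl D2 _).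
  by rewrite vD1 /X1 mulmxA D1_0 -?mulmxA -?vD1 -?vD2 ?mul0mx ?sub0mx.
apply/eqmxP; rewrite -(mxrank_leqif_eq (_ : (X1 + X2 <= cyc t)%MS)); last first.
  by rewrite addsmx_sub X1c X2c.
rewrite mxrank_disjoint_sum // !mxrankMfree ?row_free_unit // -mxrank_maskmxU; last first.
  by move=> i /andP[_ /ess_S0 S0]; rewrite /= (negPf S0) andbF.
rewrite (cyc_basis tN) mxrankMfree ?row_free_unit //; apply/eqP; congr (\rank _).
by apply: eq_maskmx => i; rewrite /= nonpivot_split andb_orr.
Qed.

Lemma rep_born t x : (t <= N)%N -> x \in bar_index -> ((bar x).1 <= t)%N ->
  (rep x <= cyc t)%MS.
Proof.
case: x => j [] tN; rewrite /bar /rep /=.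
  by rewrite mem_bar_index_finite (birthE _ hWu hWi tN) => /andP[Sj _] Lj; apply: rowW_cyc.
by rewrite mem_bar_index_essential (birthE _ hVu hVi tN) => /andP[_ np] Lj; apply: rowG_cyc.
Qed.

Lemma rep_dead t x : (t <= N)%N -> x \in bar_index -> dead_at t (bar x) ->
  (rep x <= bnd t)%MS.
Proof.
case: x => j [] tN //; rewrite mem_bar_index_finite /bar /rep /dead_at /= => /andP[Sj _].
by rewrite (deathE tN Sj); apply: rowW_bnd.
Qed.

Lemma cyc_bnd_span t : (t <= N)%N ->
  (cyc t + bnd t <= \sum_(x <- bar_index | ((bar x).1 <= t)%N) <<rep x>> + bnd t)%MS.
Proof.
move=> tN; rewrite addsmx_sub addsmxSr andbT -(cyc_decomposition tN) addsmx_sub.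
have in_span x : x \in bar_index -> ((bar x).1 <= t)%N ->
    (rep x <= \sum_(y <- bar_index | ((bar y).1 <= t)%N) <<rep y>> + bnd t)%MS.
  move=> xin born; apply: submx_trans (addsmxSl _ _).
  by rewrite (big_rem x xin) born; apply: submx_trans (addsmxSl _ _); rewrite genmxE.
apply/andP; split; apply/row_subP=> i; rewrite row_maskmx_mul.
  case: ifP => [/andP[Li ess_i] | _]; last exact: sub0mx.
  apply: (in_span (i, false)); first by rewrite mem_bar_index_essential.
  by rewrite /= (birthE _ hVu hVi tN).
case: ifP => [/andP[Li /= Si] | _]; last exact: sub0mx.
case fin_i: (finite_bar i).
  apply: (in_span (i, true)); first by rewrite mem_bar_index_finite.
  by rewrite /= (birthE _ hWu hWi tN).
apply: submx_trans (addsmxSr _ _); apply: rowW_bnd => //.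
rewrite -(deathE tN Si); move: fin_i; rewrite /finite_bar Si /= => /negbT; rewrite -leqNgt.
by move/leq_trans; apply; rewrite (birthE _ hWu hWi tN).
Qed.

Lemma reps_indep t (c : 'I_n * bool -> F) : (t <= N)%N ->
  (forall x, x \in bar_index -> c x != 0 -> alive_at t (bar x)) ->
  ((\sum_(x <- bar_index) c x *: rep x)%R <= bnd t)%MS ->
  forall x, x \in bar_index -> c x = 0.
Proof.
move=> tN c_alive; set dead := has_piv_in S (inK t).
pose y1 : 'rV[F]_n := \row_j (if finite_bar j then c (j, true) else 0).
pose y2 : 'rV[F]_n := \row_j (if essential j then c (j, false) else 0).
have -> : (\sum_(x <- bar_index) c x *: rep x)%R = y1 *m invmx W + y2 *m invmx G.
  by rewrite big_cat !big_map !big_filter /= !sum_enum_scale_row.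
rewrite (bnd_basis tN) => /submxP[D yD]; set z := D *m maskmx F dead.
have y2z : y2 *m invmx G = (z - y1) *m invmx W.
  by rewrite mulmxBl -mulmxA -yD addrC addKr.
have y2_0 : y2 = 0.
  apply: (@disjoint_supp_mul_upper_eq0 _ _ _ _ essential [pred j | col j S != 0] _ _
    Ginv_upper Ginv_unit Winv_upper Winv_unit _ _ _ y2z).
  - by move=> i /andP[/eqP R0 _]; rewrite /= negbK col_eq0_SR R0.
  - by apply/sub_maskmxP=> r k ness; rewrite mxE (negPf ness).
  - apply: addmx_sub.
      rewrite /z; apply: submx_trans (submxMl _ _) _; apply: maskmxS => j.
      exact: has_piv_in_col_neq0.
    by rewrite eqmx_opp; apply/sub_maskmxP=> r k /= nfin; rewrite mxE /finite_bar (negPf nfin).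
have y1z : y1 = z.
  apply: (can_inj (mulmxKV hWi)); apply/eqP.
  by rewrite eq_sym -subr_eq0 -mulmxBl -y2z y2_0 mul0mx.
case=> j [] xin.
  have fin_j : finite_bar j by rewrite -mem_bar_index_finite.
  apply: contraTeq isT => cj; have /andP[_] := c_alive _ xin cj.
  rewrite /bar /dead_at /= (deathE tN (proj1 (andP fin_j))) => /negPf nd.
  have := congr1 (fun y : 'rV[F]_n => y 0 j) y1z; rewrite /z mulmx_maskmx /dead nd mxE fin_j => cj0.
  by rewrite cj0 eqxx in cj.
have := congr1 (fun y : 'rV[F]_n => y 0 j) y2_0; rewrite !mxE.
by rewrite -mem_bar_index_essential xin.
Qed.

Lemma barcode_rowA : has_barcode N (fun t => (cyc t + bnd t)%MS) bnd (map bar bar_index).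
Proof.
apply: (has_barcode_reps (rep := rep) bar_index_uniq) => t tN; split.
- by move=> x xin born /=; apply: submx_trans (addsmxSl _ _); apply: rep_born.
- by move=> x; apply: rep_dead.
- exact: cyc_bnd_span tN.
- by move=> c; apply: reps_indep.
Qed.

Lemma barcode_image :
  has_barcode N
    (fun t => (cyclesmx F eps sigma (Lf t) + boundsmx F eps sigma (Kf t))%MS)
    (fun t => boundsmx F eps sigma (Kf t)) (map bar bar_index).
Proof.
pose rho : 'S_n := perm (@rev_ord_inj n).
have sigmaE i : sigma i = rowA (rho i) by rewrite /rowA permE rev_ordK.
apply: (sq_iso_mulmx_unit (J := invmx (perm_mx rho)) _ _ _ barcode_rowA) => [|t|t].
- by rewrite unitmx_inv unitmx_perm.
- apply: eqmx_trans (adds_eqmx (cyclesmx_perm F eps sigmaE _) (boundsmx_perm F eps sigmaE _)) _.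
  exact/eqmx_sym/addsmxMr.
- exact: (boundsmx_perm F eps sigmaE (Kf t)).
Qed.

End PersistentImage.

Theorem corollary3p13
  (F : fieldType) (N m n : nat) (eps : simplex m -> bool)
  (K : {set simplex m}) (Kf Lf : nat -> {set simplex m})
  (hK : is_complex K)
  (hKf : forall t, (t <= N)%N -> is_complex (Kf t))
  (hLf : forall t, (t <= N)%N -> is_complex (Lf t))
  (hK0 : Kf 0%N = set0) (hL0 : Lf 0%N = set0)
  (hKN : Kf N = K) (hLN : Lf N = K)
  (hKmono : forall t, (t < N)%N -> Kf t \subset Kf t.+1)
  (hLmono : forall t, (t < N)%N -> Lf t \subset Lf t.+1)
  (hLK : forall t, (t <= N)%N -> Lf t \subset Kf t)
  (sigma tau : 'I_n -> simplex m)
  (hsig_inj : injective sigma) (hsig_in : forall i, sigma i \in K)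
  (hsig_onto : forall s, s \in K -> exists i, sigma i = s)
  (hsig_ord : forall i j : 'I_n, (i <= j)%N ->
      (entry N Lf (sigma i) <= entry N Lf (sigma j))%N)
  (htau_inj : injective tau) (htau_in : forall i, tau i \in K)
  (htau_onto : forall s, s \in K -> exists i, tau i = s)
  (htau_ord : forall i j : 'I_n, (i <= j)%N ->
      (entry N Kf (tau i) <= entry N Kf (tau j))%N)
  (A B V W R S : 'M[F]_n)
  (hA : A = \matrix_(i, j) bdcoef F eps (sigma (rev_ord j)) (sigma (rev_ord i)))
  (hB : B = \matrix_(i, j) bdcoef F eps (sigma (rev_ord j)) (tau (rev_ord i)))
  (hVu : upper_triangular V) (hVi : V \in unitmx)
  (hWu : upper_triangular W) (hWi : W \in unitmx)
  (hR : R = A *m V) (hS : S = B *m W)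
  (hRred : reduced R) (hSred : reduced S) :
  let rowA := fun i : 'I_n => sigma (rev_ord i) in
  let rowB := fun i : 'I_n => tau (rev_ord i) in
  let k := entry N Kf in
  let l := entry N Lf in
  (forall j : 'I_n, col j S == 0 <-> col j R == 0) /\
  has_barcode N
    (fun t => (cyclesmx F eps sigma (Lf t) + boundsmx F eps sigma (Kf t))%MS)
    (fun t => boundsmx F eps sigma (Kf t))
    ([seq (l (pivsimp rowA W j), Some (k (pivsimp rowB S j)))
        | j <- enum 'I_n &
          (col j S != 0) && (l (pivsimp rowA W j) < k (pivsimp rowB S j))%N]
     ++
     [seq (l (pivsimp rowA V i), None)
        | i <- enum 'I_n & (col i R == 0) && (i \notin pivs R)]).
Proof.
move=> rowA rowB k l; split=> [j|].
  by rewrite (col_eq0_SR hsig_onto htau_inj htau_in hA hB hVu hVi hWu hWi hR hS hRred hSred).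
have := barcode_image hK hKN hLN hKmono hLmono hsig_inj hsig_in hsig_onto hsig_ord
  htau_inj htau_in htau_ord hA hB hVu hVi hWu hWi hR hS hRred hSred.
by rewrite /bar_index map_cat -!map_comp.
Qed.
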